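(* In the fixed-base chain setting of the context, let $i\in\{1,\ldots,N\}$ and suppose $\mathbf{V}_{i-1}$ is a matrix with $\mathrm{Range}(\mathbf{V}_{i-1})=\mathcal{V}_{i-1}$ (for $i=1$ one may take $\mathbf{V}_0=\mathbf{0}_{6\times1}$). Let ${}^{J_i}\mathbf{V}_{i-1}={}^{J_i}\mathbf{X}_{i-1}\mathbf{V}_{i-1}$. Then the matrix $$\mathbf{V}_i=\Big[\ {}^{J_i}\mathbf{V}_{i-1},\ (\boldsymbol{\Phi}_i\times){}^{J_i}\mathbf{V}_{i-1},\ \ldots,\ (\boldsymbol{\Phi}_i\times)^5\,{}^{J_i}\mathbf{V}_{i-1},\ \ \boldsymbol{\Phi}_i\ \Big]$$ (i.e. the controllability matrix of the pair $((\boldsymbol\Phi_i\times),{}^{J_i}\mathbf V_{i-1})$ augmented by the column $\boldsymbol\Phi_i$) satisfies $\mathrm{Range}(\mathbf{V}_i)=\mathcal{V}_i$.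
   Context: Spatial notation. For $\mathbf{x}\in\mathbb{R}^3$, $\mathbf{S}(\mathbf{x})$ is the skew-symmetric matrix with $\mathbf{S}(\mathbf{x})\mathbf{y}=\mathbf{x}\times\mathbf{y}$. For $\mathbf{v}=[\boldsymbol{\omega};\mathbf{u}]\in\mathbb{R}^6$, $(\mathbf{v}\times)=\begin{bmatrix}\mathbf{S}(\boldsymbol{\omega})&\mathbf{0}\\ \mathbf{S}(\mathbf{u})&\mathbf{S}(\boldsymbol{\omega})\end{bmatrix}$. A spatial transform is a matrix $\begin{bmatrix}\mathbf{R}&\mathbf{0}\\-\mathbf{R}\mathbf{S}(\mathbf{p})&\mathbf{R}\end{bmatrix}$ with $\mathbf{R}\in SO(3)$, $\mathbf{p}\in\mathbb{R}^3$. Fixed-base chain. Body $0$ is the fixed ground with $\mathbf{v}_0=\mathbf{0}$. For $i=1,\ldots,N$, joint $i$ has coordinate $q_i\in\mathbb{R}$ and $\mathbf{v}_i={}^{i}\mathbf{X}_{i-1}(q_i)\mathbf{v}_{i-1}+\boldsymbol{\Phi}_i\dot q_i$, where $\boldsymbol{\Phi}_i\in\mathbb{R}^6$ is fixed, ${}^{i}\mathbf{X}_{i-1}(q_i)={}^{i}\mathbf{X}_{J_i}(q_i)\,{}^{J_i}\mathbf{X}_{i-1}$, ${}^{J_i}\mathbf{X}_{i-1}$ is a constant spatial transform, and ${}^{i}\mathbf{X}_{J_i}(q_i)$ is a spatial transform with ${}^{i}\mathbf{X}_{J_i}(0)=\mathbf{1}_6$ and $\frac{d}{dq_i}{}^{i}\mathbf{X}_{J_i}(q_i)=-(\boldsymbol{\Phi}_i\times){}^{i}\mathbf{X}_{J_i}(q_i)$.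 The attainable velocity span of body $i$ is $\mathcal{V}_i=\mathrm{span}\{\mathbf{v}_i(\mathbf{q},\dot{\mathbf{q}}):\mathbf{q},\dot{\mathbf{q}}\in\mathbb{R}^N\}\subseteq\mathbb{R}^6$, with $\mathcal V_0=\{\mathbf 0\}$. *)

From Stdlib Require Import Reals Lra Lia List Arith.
Import ListNotations.
Open Scope R_scope.

(* Vectors and matrices are functions of (0-based) indices; only indices
   0..2 (R^3, 3x3) resp. 0..5 (R^6, 6x6) are meaningful. *)
Definition Vec := nat -> R.
Definition Mat := nat -> nat -> R.

Fixpoint rsum (n : nat) (f : nat -> R) : R :=
  match n with O => 0 | S m => rsum m f + f m end.

Definition matmul (n : nat) (A B : Mat) : Mat :=
  fun i j => rsum n (fun k => A i k * B k j).

Definition matvec (n : nat) (A : Mat) (v : Vec) : Vec :=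
  fun i => rsum n (fun k => A i k * v k).

Definition idm : Mat := fun i j => if Nat.eqb i j then 1 else 0.

Fixpoint mpow (k : nat) (A : Mat) : Mat :=
  match k with O => idm | S m => matmul 6 A (mpow m A) end.

(* S(x) : S(x) y = x × y *)
Definition skew3 (x : Vec) : Mat := fun i j =>
  match i, j with
  | 0, 1 => - x 2%nat | 0, 2 => x 1%nat
  | 1, 0 => x 2%nat   | 1, 2 => - x 0%nat
  | 2, 0 => - x 1%nat | 2, 1 => x 0%nat
  | _, _ => 0
  end.

(* (v×) for v = [ω; u] : [[S ω, 0]; [S u, S ω]] *)
Definition crossm (v : Vec) : Mat := fun i j =>
  let w : Vec := fun k => v k in
  let u : Vec := fun k => v (k + 3)%nat in
  if Nat.ltb i 3 then (if Nat.ltb j 3 then skew3 w i j else 0)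
  else (if Nat.ltb j 3 then skew3 u (i - 3)%nat j
        else skew3 w (i - 3)%nat (j - 3)%nat).

Definition det3 (M : Mat) : R :=
  M 0%nat 0%nat * (M 1%nat 1%nat * M 2%nat 2%nat - M 1%nat 2%nat * M 2%nat 1%nat)
  - M 0%nat 1%nat * (M 1%nat 0%nat * M 2%nat 2%nat - M 1%nat 2%nat * M 2%nat 0%nat)
  + M 0%nat 2%nat * (M 1%nat 0%nat * M 2%nat 1%nat - M 1%nat 1%nat * M 2%nat 0%nat).

Definition SO3 (Rm : Mat) : Prop :=
  (forall i j, (i < 3)%nat -> (j < 3)%nat ->
     rsum 3 (fun k => Rm k i * Rm k j) = idm i j) /\ det3 Rm = 1.

Definition spatial_transform (X : Mat) : Prop :=
  exists (Rm : Mat) (p : Vec), SO3 Rm /\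
    forall i j, (i < 6)%nat -> (j < 6)%nat ->
      X i j = (if Nat.ltb i 3 then (if Nat.ltb j 3 then Rm i j else 0)
               else (if Nat.ltb j 3 then - matmul 3 Rm (skew3 p) (i - 3)%nat j
                     else Rm (i - 3)%nat (j - 3)%nat)).

Definition in_span (S : Vec -> Prop) (v : Vec) : Prop :=
  exists l : list (R * Vec),
    Forall (fun p => S (snd p)) l /\
    forall k, (k < 6)%nat ->
      v k = fold_right (fun p acc => fst p * snd p k + acc) 0 l.

(* Range of the 6 x m matrix with column list cols *)
Definition range (cols : list Vec) : Vec -> Prop :=
  in_span (fun w => In w cols).

(* ^iX_{i-1}(q_i) = ^iX_{J_i}(q_i) ^{J_i}X_{i-1} *)
Definition Xlink (XJ : nat -> R -> Mat) (XJfix : nat -> Mat) (i : nat) (qi : R) : Mat :=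
  matmul 6 (XJ i qi) (XJfix i).

(* body velocities; q, qd indexed 1..N (joint i uses q i, qd i) *)
Fixpoint vel (Phi : nat -> Vec) (XJ : nat -> R -> Mat) (XJfix : nat -> Mat)
         (q qd : nat -> R) (i : nat) : Vec :=
  match i with
  | O => fun _ => 0
  | S m => fun k => matvec 6 (Xlink XJ XJfix (S m) (q (S m)))
                      (vel Phi XJ XJfix q qd m) k + qd (S m) * Phi (S m) k
  end.

Definition attainable (Phi : nat -> Vec) (XJ : nat -> R -> Mat) (XJfix : nat -> Mat)
           (i : nat) : Vec -> Prop :=
  in_span (fun v => exists q qd : nat -> R, v = vel Phi XJ XJfix q qd i).

Definition chain_ok (N : nat) (Phi : nat -> Vec) (XJ : nat -> R -> Mat)
           (XJfix : nat -> Mat) : Prop :=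
  forall i, (1 <= i <= N)%nat ->
    spatial_transform (XJfix i) /\
    (forall qi, spatial_transform (XJ i qi)) /\
    (forall r c, (r < 6)%nat -> (c < 6)%nat -> XJ i 0 r c = idm r c) /\
    (forall qi r c, (r < 6)%nat -> (c < 6)%nat ->
       derivable_pt_lim (fun t => XJ i t r c) qi
         (- matmul 6 (crossm (Phi i)) (XJ i qi) r c)).

Definition next_cols (Phi : nat -> Vec) (XJfix : nat -> Mat) (i : nat)
           (Vprev : list Vec) : list Vec :=
  let JV := map (matvec 6 (XJfix i)) Vprev in
  flat_map (fun k => map (matvec 6 (mpow k (crossm (Phi i)))) JV) (seq 0 6)
  ++ [Phi i].

From Stdlib Require Import Reals List Arith Lia Lra Psatz FunctionalExtensionality Classical.
From mathcomp Require all_boot all_algebra Rstruct.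
Import ListNotations.
Open Scope R_scope.

(* Write A = (Φ_i×) and F = ^{J_i}X_{i-1}. Moving only q_i, the velocity of body i runs
   over X_J(t) F v_{i-1} + q̇_i Φ_i, where X_J solves X' = -A X, X(0) = 1. Both inclusions
   of spans are checked on annihilators y. If y kills X_J(t) z for every t, differentiating
   at t = 0 shows that y kills every A^k z. Conversely, if y kills z, Az, ..., A^4 z, then
   h_k(t) = y·A^k X_J(t) z satisfies h_k' = -h_(k+1), the system being closed by
   A^5 = -2|ω|² A^3 - |ω|⁴ A; all h_k vanish at 0, so the energy Σ h_k² obeys
   |E'| <= C E with E(0) = 0 and vanishes identically. *)

Lemma rsum_ext n f g : (forall k, (k < n)%nat -> f k = g k) -> rsum n f = rsum n g.
Proof.
  induction n as [|n IH]; intros H; simpl; auto.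
  rewrite IH by (intros; apply H; lia); rewrite H by lia; reflexivity.
Qed.

Lemma rsum_add n f g : rsum n (fun k => f k + g k) = rsum n f + rsum n g.
Proof. induction n as [|n IH]; simpl; [ring | rewrite IH; ring]. Qed.

Lemma rsum_scal n c f : rsum n (fun k => c * f k) = c * rsum n f.
Proof. induction n as [|n IH]; simpl; [ring | rewrite IH; ring]. Qed.

Lemma rsum_eq0 n f : (forall k, (k < n)%nat -> f k = 0) -> rsum n f = 0.
Proof.
  intros H; rewrite (rsum_ext n f (fun _ => 0)) by exact H; clear H.
  induction n as [|n IH]; simpl; [|rewrite IH]; ring.
Qed.

Lemma rsum_swap n m (f : nat -> nat -> R) :
  rsum n (fun a => rsum m (fun b => f a b)) = rsum m (fun b => rsum n (fun a => f a b)).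
Proof.
  induction n as [|n IH]; simpl.
  - symmetry; apply rsum_eq0; auto.
  - rewrite IH, <- rsum_add; reflexivity.
Qed.

Definition dot (y x : Vec) : R := rsum 6 (fun k => y k * x k).

Definition lincomb (l : list (R * Vec)) : Vec :=
  fun k => fold_right (fun p acc => fst p * snd p k + acc) 0 l.

Lemma dot_ext y x x' : (forall k, (k < 6)%nat -> x k = x' k) -> dot y x = dot y x'.
Proof. intros H; apply rsum_ext; intros k Hk; rewrite H; auto. Qed.

Lemma dot_add y x x' : dot y (fun k => x k + x' k) = dot y x + dot y x'.
Proof. unfold dot; rewrite <- rsum_add; apply rsum_ext; intros; ring. Qed.

Lemma dot_scal y a x : dot y (fun k => a * x k) = a * dot y x.
Proof. unfold dot; rewrite <- rsum_scal; apply rsum_ext; intros; ring. Qed.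

Lemma dot_opp y x : dot y (fun k => - x k) = - dot y x.
Proof. transitivity (-1 * dot y x); [|ring]; rewrite <- dot_scal; apply dot_ext; intros; ring. Qed.

Lemma matvec_ext M x x' r :
  (forall k, (k < 6)%nat -> x k = x' k) -> matvec 6 M x r = matvec 6 M x' r.
Proof. intros H; apply rsum_ext; intros k Hk; rewrite H; auto. Qed.

Lemma matvec_zero M : matvec 6 M (fun _ => 0) = fun _ => 0.
Proof. apply functional_extensionality; intros r; apply rsum_eq0; intros; ring. Qed.

Lemma matvec_opp M x r : matvec 6 M (fun k => - x k) r = - matvec 6 M x r.
Proof.
  transitivity (-1 * matvec 6 M x r); [|ring].
  unfold matvec; rewrite <- rsum_scal; apply rsum_ext; intros; ring.
Qed.

Lemma matvec_idm x r : (r < 6)%nat -> matvec 6 idm x r = x r.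
Proof. intros Hr; unfold matvec, idm; do 6 (destruct r as [|r]; [simpl; ring|]); lia. Qed.

Lemma matvec_matmul M P x r : matvec 6 (matmul 6 M P) x r = matvec 6 M (matvec 6 P x) r.
Proof.
  unfold matvec, matmul.
  transitivity (rsum 6 (fun k => rsum 6 (fun j => M r j * (P j k * x k)))).
  - apply rsum_ext; intros; rewrite Rmult_comm, <- rsum_scal; apply rsum_ext; intros; ring.
  - rewrite rsum_swap; apply rsum_ext; intros; rewrite <- rsum_scal; reflexivity.
Qed.

Lemma dot_matvec y M x : dot y (matvec 6 M x) = dot (fun k => rsum 6 (fun r => y r * M r k)) x.
Proof.
  unfold dot, matvec.
  transitivity (rsum 6 (fun r => rsum 6 (fun k => y r * M r k * x k))).
  - apply rsum_ext; intros; rewrite <- rsum_scal; apply rsum_ext; intros; ring.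
  - rewrite rsum_swap; apply rsum_ext; intros.
    rewrite Rmult_comm, <- rsum_scal; apply rsum_ext; intros; ring.
Qed.

Lemma dot_in_span_eq0 (S : Vec -> Prop) y v :
  (forall s, S s -> dot y s = 0) -> in_span S v -> dot y v = 0.
Proof.
  intros Hy [l [Hl Hv]]; rewrite (dot_ext y v (lincomb l)) by exact Hv; clear v Hv.
  induction Hl as [|p l Hp _ IH].
  - unfold dot; apply rsum_eq0; intros; unfold lincomb; simpl; ring.
  - change (lincomb (p :: l)) with (fun k => fst p * snd p k + lincomb l k).
    rewrite dot_add, dot_scal, Hy, IH by exact Hp; ring.
Qed.

Lemma in_span_of_mem (S : Vec -> Prop) v : S v -> in_span S v.
Proof. intros Hv; exists [(1, v)]; split; [constructor; auto | intros; simpl; ring]. Qed.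

Module SpanDuality.
Import all_boot all_algebra Rstruct.
Import GRing.Theory.

Section RowSpaces.
Local Open Scope ring_scope.

Definition rowv (t : Vec) : 'rV[R]_6 := \row_(j < 6) t j.

Definition span_mx (L : list Vec) : 'M[R]_6 :=
  foldr (fun t acc => (rowv t + acc)%MS) 0 L.

Lemma rsum_big n f : rsum n f = \sum_(k < n) f k.
Proof. by elim: n => [|n IH] /=; rewrite ?big_ord0 // big_ord_recr /= IH. Qed.

Lemma span_mx_lincomb L (w : 'rV[R]_6) : (w <= span_mx L)%MS ->
  exists l, Forall (fun p => In (snd p) L) l /\ forall k : 'I_6, w 0 k = lincomb l k.
Proof.
elim: L w => [|t L IH] w /=.
  by rewrite submx0 => /eqP ->; exists nil; split => // k; rewrite mxE.
move=> /sub_addsmxP [[u1 u2] /= ->].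
have [l [Hl Hk]] := IH (u2 *m span_mx L) (submxMl _ _).
exists ((u1 0 0, t) :: l); split.
  by constructor; [left | apply: Forall_impl Hl => p /= Hp; right].
move=> k; rewrite -[lincomb _ k]/(u1 0 0 * t k + lincomb l k) -Hk.
by rewrite !mxE big_ord1 !mxE.
Qed.

Lemma exists_spanning_list (T : Vec -> Prop) :
  exists L, Forall T L /\ forall t, T t -> (rowv t <= span_mx L)%MS.
Proof.
apply: NNPP => noL.
have escape L : Forall T L -> exists t, T t /\ ~ (rowv t <= span_mx L)%MS.
  move=> HL; apply: NNPP => H; apply: noL; exists L; split => // t Ht.
  by apply: NNPP => Hn; apply: H; exists t.
have grow k : exists L, Forall T L /\ (k <= \rank (span_mx L))%N.
  elim: k => [|k [L [HL Hk]]]; first by exists nil.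
  have [t [Ht Hn]] := escape L HL.
  exists (t :: L); split; first by constructor.
  have lt : (span_mx L < rowv t + span_mx L)%MS.
    rewrite ltmxE addsmxSr /=; apply/negP => Hs; apply: Hn.
    exact: submx_trans (addsmxSl _ _) Hs.
  exact: leq_ltn_trans Hk (rank_ltmx lt).
have [L [_ Hk]] := grow 7%N.
by have := leq_trans Hk (rank_leq_col (span_mx L)).
Qed.

Lemma dot_rowv_mulmx (t : Vec) (M : 'M[R]_6) j :
  dot (fun k => if (k < 6)%N then M (inord k) j else 0) t = (rowv t *m M) 0 j.
Proof.
rewrite /dot rsum_big !mxE; apply: eq_bigr => k _.
by rewrite ltn_ord inord_val mxE mulrC.
Qed.

End RowSpaces.

(* If [u] left the row space spanned by [T], a column of the cokernel of that row space
   would annihilate [T] but not [u]. *)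
Lemma in_span_of_annihilators (T : Vec -> Prop) (u : Vec) :
  (forall y, (forall t, T t -> dot y t = 0) -> dot y u = 0) -> in_span T u.
Proof.
move=> Hu; have [L [HL spanL]] := exists_spanning_list T.
have uL : (rowv u <= span_mx L)%MS.
  apply: NNPP => Hn.
  have : (rowv u *m cokermx (span_mx L) != 0)%R by rewrite -submxE; apply/negP.
  move=> /eqP; apply; apply/matrixP => i j.
  rewrite ord1 -dot_rowv_mulmx mxE; apply: Hu => t Ht.
  by rewrite dot_rowv_mulmx; move: (spanL t Ht); rewrite submxE => /eqP ->; rewrite mxE.
have [l [Hl Hk]] := span_mx_lincomb _ _ uL.
exists l; split.
  by apply: Forall_impl Hl => p Hp; move: HL; rewrite Forall_forall; apply.
by move=> k /ltP Hk6; have := Hk (Ordinal Hk6); rewrite mxE.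
Qed.

End SpanDuality.

Lemma in_span_incl (S1 S2 : Vec -> Prop) :
  (forall y, (forall s, S2 s -> dot y s = 0) -> forall s, S1 s -> dot y s = 0) ->
  forall v, in_span S1 v -> in_span S2 v.
Proof.
  intros H v Hv; apply SpanDuality.in_span_of_annihilators; intros y Hy.
  exact (dot_in_span_eq0 S1 y v (H y Hy) Hv).
Qed.

Lemma derivable_pt_lim_exp_scal C t : derivable_pt_lim (fun s => exp (C * s)) t (C * exp (C * t)).
Proof.
  rewrite Rmult_comm; apply (derivable_pt_lim_comp (fun s => C * s) exp).
  - rewrite <- (Rmult_1_r C) at 1; apply derivable_pt_lim_scal, derivable_pt_lim_id.
  - apply derivable_pt_lim_exp.
Qed.

Lemma nonneg_energy_eq0 (E D : R -> R) C :
  (forall s, 0 <= E s) -> (forall s, derivable_pt_lim E s (D s)) ->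
  (forall s, Rabs (D s) <= C * E s) -> E 0 = 0 -> forall t, E t = 0.
Proof.
  intros E_ge0 E' D_bound E0 t.
  assert (D_between : forall s, - (C * E s) <= D s <= C * E s).
  { intros s; pose proof (D_bound s); pose proof (Rle_abs (D s)).
    pose proof (Rle_abs (- D s)); rewrite Rabs_Ropp in *; lra. }
  assert (weighted_deriv : forall K s, derivable_pt_lim (fun s => E s * exp (K * s)) s
                                     ((D s + K * E s) * exp (K * s))).
  { intros K s.
    replace ((D s + K * E s) * exp (K * s))
      with (D s * exp (K * s) + E s * (K * exp (K * s))) by ring.
    apply (derivable_pt_lim_mult E (fun s => exp (K * s)));
      [apply E' | apply derivable_pt_lim_exp_scal]. }
  assert (E0w : forall K, E 0 * exp (K * 0) = 0) by (intros; rewrite E0; ring).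
  (* E(s) e^(Cs) is nondecreasing and E(s) e^(-Cs) nonincreasing; both vanish at 0. *)
  destruct (Rtotal_order t 0) as [t_neg | [-> | t_pos]].
  - destruct (MVT_cor2 _ _ t 0 t_neg (fun s _ => weighted_deriv C s)) as [x [Hx _]].
    cbv beta in Hx; rewrite E0w in Hx.
    assert (0 <= (D x + C * E x) * exp (C * x)).
    { apply Rmult_le_pos; [pose proof (D_between x); lra | apply Rlt_le, exp_pos]. }
    pose proof (exp_pos (C * t)); pose proof (E_ge0 t); nra.
  - exact E0.
  - destruct (MVT_cor2 _ _ 0 t t_pos (fun s _ => weighted_deriv (- C) s)) as [x [Hx _]].
    cbv beta in Hx; rewrite E0w in Hx.
    assert (0 <= (C * E x - D x) * exp (- C * x)).
    { apply Rmult_le_pos; [pose proof (D_between x); lra | apply Rlt_le, exp_pos]. }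
    pose proof (exp_pos (- C * t)); pose proof (E_ge0 t); nra.
Qed.

Lemma derivable_pt_lim_rsum n (f : nat -> R -> R) f' t :
  (forall k, (k < n)%nat -> derivable_pt_lim (f k) t (f' k)) ->
  derivable_pt_lim (fun s => rsum n (fun k => f k s)) t (rsum n f').
Proof.
  induction n as [|n IH]; intros H; simpl.
  - apply derivable_pt_lim_const.
  - apply derivable_pt_lim_plus; [apply IH; intros; apply H | apply H]; lia.
Qed.

Lemma cross_term_bound a u v :
  - (Rabs a * (u * u + v * v)) <= 2 * a * u * v <= Rabs a * (u * u + v * v).
Proof.
  pose proof (pow2_ge_0 (u - v)); pose proof (pow2_ge_0 (u + v)).
  destruct (Rcase_abs a) as [a_neg | a_nneg];
    [rewrite Rabs_left by exact a_neg | rewrite Rabs_right by exact a_nneg]; split; nra.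
Qed.

Lemma companion5_eq0 (h : nat -> R -> R) b c :
  (forall k t, (k < 5)%nat -> derivable_pt_lim (h k) t (- h (S k) t)) ->
  (forall t, h 5%nat t = b * h 3%nat t + c * h 1%nat t) ->
  (forall k, (k < 5)%nat -> h k 0 = 0) ->
  forall t, h 0%nat t = 0.
Proof.
  intros h' h5 h_at0 t.
  set (E := fun s => rsum 5 (fun k => h k s * h k s)).
  set (D := fun s => rsum 5 (fun k => 2 * h k s * - h (S k) s)).
  assert (sq : forall k s, 0 <= h k s * h k s) by (intros; apply Rle_0_sqr).
  assert (E_ge0 : forall s, 0 <= E s).
  { intros s; unfold E; simpl.
    pose proof (sq 0%nat s); pose proof (sq 1%nat s); pose proof (sq 2%nat s);
      pose proof (sq 3%nat s); pose proof (sq 4%nat s); lra. }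
  assert (E' : forall s, derivable_pt_lim E s (D s)).
  { intros s; apply (derivable_pt_lim_rsum 5 (fun k s => h k s * h k s)); intros k Hk.
    replace (2 * h k s * - h (S k) s) with (- h (S k) s * h k s + h k s * - h (S k) s) by ring.
    apply (derivable_pt_lim_mult (h k) (h k)); apply h'; exact Hk. }
  assert (D_bound : forall s, Rabs (D s) <= (2 + Rabs b + Rabs c) * E s).
  { intros s; unfold D, E; simpl; rewrite h5.
    pose proof (cross_term_bound 1 (h 0%nat s) (h 1%nat s)).
    pose proof (cross_term_bound 1 (h 1%nat s) (h 2%nat s)).
    pose proof (cross_term_bound 1 (h 2%nat s) (h 3%nat s)).
    pose proof (cross_term_bound 1 (h 3%nat s) (h 4%nat s)).
    pose proof (cross_term_bound b (h 4%nat s) (h 3%nat s)).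
    pose proof (cross_term_bound c (h 4%nat s) (h 1%nat s)).
    rewrite Rabs_R1 in *.
    assert (0 <= Rabs b * (h 0%nat s * h 0%nat s + h 1%nat s * h 1%nat s + h 2%nat s * h 2%nat s)).
    { apply Rmult_le_pos; [apply Rabs_pos | pose proof (sq 0%nat s); pose proof (sq 1%nat s);
                                             pose proof (sq 2%nat s); lra]. }
    assert (0 <= Rabs c * (h 0%nat s * h 0%nat s + h 2%nat s * h 2%nat s + h 3%nat s * h 3%nat s)).
    { apply Rmult_le_pos; [apply Rabs_pos | pose proof (sq 0%nat s); pose proof (sq 2%nat s);
                                             pose proof (sq 3%nat s); lra]. }
    apply Rabs_le; split; nra. }
  assert (E0 : E 0 = 0) by (unfold E; simpl; rewrite !h_at0 by lia; ring).
  pose proof (nonneg_energy_eq0 E D _ E_ge0 E' D_bound E0 t) as Et.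
  unfold E in Et; simpl in Et.
  pose proof (sq 0%nat t); pose proof (sq 1%nat t); pose proof (sq 2%nat t);
    pose proof (sq 3%nat t); pose proof (sq 4%nat t).
  apply Rsqr_0_uniq; unfold Rsqr; lra.
Qed.

Definition vderiv (z : R -> Vec) (z' : Vec) (t : R) : Prop :=
  forall r, (r < 6)%nat -> derivable_pt_lim (fun s => z s r) t (z' r).

Lemma vderiv_matvec (M : Mat) z z' t :
  vderiv z z' t -> vderiv (fun s => matvec 6 M (z s)) (matvec 6 M z') t.
Proof.
  intros Hz r _; apply (derivable_pt_lim_rsum 6 (fun k s => M r k * z s k)); intros k Hk.
  apply derivable_pt_lim_scal, Hz, Hk.
Qed.

Lemma derivable_pt_lim_dot y z z' t :
  vderiv z z' t -> derivable_pt_lim (fun s => dot y (z s)) t (dot y z').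
Proof.
  intros Hz; apply (derivable_pt_lim_rsum 6 (fun k s => y k * z s k)); intros k Hk.
  apply derivable_pt_lim_scal, Hz, Hk.
Qed.

Lemma matvec_mpowS A k x : matvec 6 (mpow (S k) A) x = matvec 6 A (matvec 6 (mpow k A) x).
Proof. apply functional_extensionality; intros r; apply matvec_matmul. Qed.

Lemma matvec_mpowSr A k x r : (r < 6)%nat ->
  matvec 6 (mpow (S k) A) x r = matvec 6 (mpow k A) (matvec 6 A x) r.
Proof.
  revert r; induction k as [|k IH]; intros r Hr; rewrite matvec_mpowS.
  - rewrite matvec_idm by exact Hr; apply matvec_ext; intros; apply matvec_idm; assumption.
  - rewrite (matvec_mpowS A k (matvec 6 A x)); apply matvec_ext; intros; apply IH; assumption.
Qed.

Section TransformOrbit.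

Variables (X : R -> Mat) (A : Mat).
Hypothesis X_deriv : forall t r c, (r < 6)%nat -> (c < 6)%nat ->
  derivable_pt_lim (fun s => X s r c) t (- matmul 6 A (X t) r c).
Hypothesis X_at0 : forall r c, (r < 6)%nat -> (c < 6)%nat -> X 0 r c = idm r c.
Variables (y x : Vec).

Lemma vderiv_transform t :
  vderiv (fun s => matvec 6 (X s) x) (fun r => - matvec 6 A (matvec 6 (X t) x) r) t.
Proof.
  intros r Hr; rewrite <- matvec_matmul, <- matvec_opp.
  apply (derivable_pt_lim_rsum 6 (fun c s => X s r c * x c)); intros c Hc.
  replace (matmul 6 A (X t) r c * - x c) with (- matmul 6 A (X t) r c * x c + X t r c * 0) by ring.
  apply (derivable_pt_lim_mult (fun s => X s r c) (fun _ => x c));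
    [apply X_deriv; assumption | apply derivable_pt_lim_const].
Qed.

Definition orbit_coef (k : nat) (t : R) : R := dot y (matvec 6 (mpow k A) (matvec 6 (X t) x)).

Lemma orbit_coef_deriv k t : derivable_pt_lim (orbit_coef k) t (- orbit_coef (S k) t).
Proof.
  unfold orbit_coef; erewrite <- dot_opp, dot_ext.
  - apply derivable_pt_lim_dot, vderiv_matvec, vderiv_transform.
  - intros r Hr; rewrite matvec_opp, matvec_mpowSr by exact Hr; reflexivity.
Qed.

Lemma orbit_coef_pow0 t : orbit_coef 0 t = dot y (matvec 6 (X t) x).
Proof. apply dot_ext; intros; apply matvec_idm; assumption. Qed.

Lemma orbit_coef_t0 k : orbit_coef k 0 = dot y (matvec 6 (mpow k A) x).
Proof.
  apply dot_ext; intros r _; apply matvec_ext; intros c Hc.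
  rewrite <- (matvec_idm x c Hc); apply rsum_ext; intros; rewrite X_at0 by assumption; reflexivity.
Qed.

Lemma orbit_annihilated_powers :
  (forall t, dot y (matvec 6 (X t) x) = 0) -> forall k, dot y (matvec 6 (mpow k A) x) = 0.
Proof.
  intros orbit0.
  assert (coef0 : forall k t, orbit_coef k t = 0).
  { induction k as [|k IH]; intros t; [rewrite orbit_coef_pow0; apply orbit0 |].
    assert (const0 : orbit_coef k = fun _ => 0) by (apply functional_extensionality; exact IH).
    pose proof (orbit_coef_deriv k t) as Hd; rewrite const0 in Hd.
    pose proof (uniqueness_limite _ t _ _ Hd (derivable_pt_lim_const 0 t)); lra. }
  intros k; rewrite <- orbit_coef_t0; apply coef0.
Qed.

Lemma orbit_annihilated_of_powers b c :
  (forall z r, (r < 6)%nat ->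
     matvec 6 (mpow 5 A) z r = b * matvec 6 (mpow 3 A) z r + c * matvec 6 (mpow 1 A) z r) ->
  (forall k, (k < 5)%nat -> dot y (matvec 6 (mpow k A) x) = 0) ->
  forall t, dot y (matvec 6 (X t) x) = 0.
Proof.
  intros A5 powers0 t; rewrite <- orbit_coef_pow0.
  apply (companion5_eq0 orbit_coef b c).
  - intros k s _; apply orbit_coef_deriv.
  - intros s; unfold orbit_coef; rewrite <- !dot_scal, <- dot_add.
    apply dot_ext; intros; apply A5; assumption.
  - intros k Hk; rewrite orbit_coef_t0; apply powers0, Hk.
Qed.

End TransformOrbit.

Definition spatial_cross (v z : Vec) : Vec := fun r =>
  match r with
  | 0 => v 1%nat * z 2%nat - v 2%nat * z 1%nat
  | 1 => v 2%nat * z 0%nat - v 0%nat * z 2%nat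
  | 2 => v 0%nat * z 1%nat - v 1%nat * z 0%nat
  | 3 => v 4%nat * z 2%nat - v 5%nat * z 1%nat + v 1%nat * z 5%nat - v 2%nat * z 4%nat
  | 4 => v 5%nat * z 0%nat - v 3%nat * z 2%nat + v 2%nat * z 3%nat - v 0%nat * z 5%nat
  | 5 => v 3%nat * z 1%nat - v 4%nat * z 0%nat + v 0%nat * z 4%nat - v 1%nat * z 3%nat
  | _ => 0
  end.

Lemma matvec_crossm v z : matvec 6 (crossm v) z = spatial_cross v z.
Proof.
  apply functional_extensionality; intros r; unfold matvec, crossm, spatial_cross.
  do 6 (destruct r as [|r]; [simpl; ring|]); simpl; ring.
Qed.

Definition omega_sq (v : Vec) : R := v 0%nat * v 0%nat + v 1%nat * v 1%nat + v 2%nat * v 2%nat.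

(* (v×) with v = [ω; u] is annihilated by λ (λ² + |ω|²)². *)
Lemma crossm_pow5 v z r : (r < 6)%nat ->
  matvec 6 (mpow 5 (crossm v)) z r =
  (- 2 * omega_sq v) * matvec 6 (mpow 3 (crossm v)) z r
  + (- omega_sq v ^ 2) * matvec 6 (mpow 1 (crossm v)) z r.
Proof.
  intros Hr.
  assert (pow1 : matvec 6 (mpow 1 (crossm v)) z = spatial_cross v z).
  { rewrite matvec_mpowS, <- matvec_crossm; apply functional_extensionality; intros c.
    apply matvec_ext; intros; apply matvec_idm; assumption. }
  rewrite !matvec_mpowS, <- (matvec_mpowS _ 0), pow1, !matvec_crossm.
  unfold spatial_cross, omega_sq; do 6 (destruct r as [|r]; [ring|]); lia.
Qed.

Definition upd (f : nat -> R) (j : nat) (a : R) : nat -> R :=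
  fun k => if Nat.eqb k j then a else f k.

Lemma vel_upd Phi XJ XJfix q qd j a b m : (m < j)%nat ->
  vel Phi XJ XJfix (upd q j a) (upd qd j b) m = vel Phi XJ XJfix q qd m.
Proof.
  induction m as [|m IH]; intros Hm; [reflexivity |]; cbn [vel].
  rewrite IH by lia; unfold upd.
  replace (Nat.eqb (S m) j) with false by (symmetry; apply Nat.eqb_neq; lia).
  reflexivity.
Qed.

Lemma vel_succ_upd Phi XJ XJfix q qd m t s :
  vel Phi XJ XJfix (upd q (S m) t) (upd qd (S m) s) (S m) =
  fun k => matvec 6 (Xlink XJ XJfix (S m) t) (vel Phi XJ XJfix q qd m) k + s * Phi (S m) k.
Proof. cbn [vel]; rewrite vel_upd by lia; unfold upd; rewrite Nat.eqb_refl; reflexivity. Qed.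

Lemma vel_at_rest Phi XJ XJfix q m : vel Phi XJ XJfix q (fun _ => 0) m = fun _ => 0.
Proof.
  induction m as [|m IH]; [reflexivity |]; cbn [vel]; rewrite IH, matvec_zero.
  apply functional_extensionality; intros; ring.
Qed.

Lemma in_next_cols Phi XJfix i Vprev w :
  In w (next_cols Phi XJfix i Vprev) <->
  w = Phi i \/ exists k u, (k < 6)%nat /\ In u Vprev /\
                          w = matvec 6 (mpow k (crossm (Phi i))) (matvec 6 (XJfix i) u).
Proof.
  unfold next_cols; rewrite in_app_iff, in_flat_map; split.
  - intros [[k [Hk Hw]] | [Hw | []]]; [right | left; auto].
    apply in_seq in Hk; apply in_map_iff in Hw as [Fu [<- HFu]].
    apply in_map_iff in HFu as [u [<- Hu]].
    exists k, u; repeat split; auto; lia.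
  - intros [-> | [k [u [Hk [Hu ->]]]]]; [right; left; reflexivity | left].
    exists k; split; [apply in_seq; lia |].
    apply in_map_iff; exists (matvec 6 (XJfix i) u); split; [reflexivity |].
    apply in_map_iff; exists u; auto.
Qed.

Section Joint.

Variables (Phi : nat -> Vec) (XJ : nat -> R -> Mat) (XJfix : nat -> Mat).
Variables (m : nat) (Vprev : list Vec).
Hypothesis XJ_at0 : forall r c, (r < 6)%nat -> (c < 6)%nat -> XJ (S m) 0 r c = idm r c.
Hypothesis XJ_deriv : forall t r c, (r < 6)%nat -> (c < 6)%nat ->
  derivable_pt_lim (fun s => XJ (S m) s r c) t (- matmul 6 (crossm (Phi (S m))) (XJ (S m) t) r c).
Hypothesis HV : forall v, range Vprev v <-> attainable Phi XJ XJfix m v.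
Variable y : Vec.

Lemma next_cols_annihilated :
  (forall q qd, dot y (vel Phi XJ XJfix q qd (S m)) = 0) ->
  forall w, In w (next_cols Phi XJfix (S m) Vprev) -> dot y w = 0.
Proof.
  intros vel0 w Hw; apply in_next_cols in Hw as [-> | [k [u [_ [Hu ->]]]]].
  - specialize (vel0 (upd (fun _ => 0) (S m) 0) (upd (fun _ => 0) (S m) 1)).
    rewrite vel_succ_upd, vel_at_rest, matvec_zero in vel0.
    rewrite <- vel0; apply dot_ext; intros; ring.
  - rewrite (dot_ext _ _ (matvec 6 (matmul 6 (mpow k (crossm (Phi (S m)))) (XJfix (S m))) u))
      by (intros; symmetry; apply matvec_matmul).
    rewrite dot_matvec; apply (dot_in_span_eq0 (fun v => exists q qd, v = vel Phi XJ XJfix q qd m));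
      [| apply HV, in_span_of_mem, Hu].
    intros s [q [qd ->]]; rewrite <- dot_matvec.
    rewrite (dot_ext _ _ (matvec 6 (mpow k (crossm (Phi (S m))))
                            (matvec 6 (XJfix (S m)) (vel Phi XJ XJfix q qd m))))
      by (intros; apply matvec_matmul).
    apply (orbit_annihilated_powers (XJ (S m)) _ XJ_deriv XJ_at0); intros t.
    rewrite <- (vel0 (upd q (S m) t) (upd qd (S m) 0)), vel_succ_upd.
    apply dot_ext; intros; unfold Xlink; rewrite matvec_matmul; ring.
Qed.

Lemma vel_annihilated :
  (forall w, In w (next_cols Phi XJfix (S m) Vprev) -> dot y w = 0) ->
  forall q qd, dot y (vel Phi XJ XJfix q qd (S m)) = 0.
Proof.
  intros cols0 q qd; cbn [vel].
  rewrite dot_add, dot_scal, (cols0 (Phi (S m))) by (apply in_next_cols; left; reflexivity).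
  rewrite Rmult_0_r, Rplus_0_r, dot_matvec.
  apply (dot_in_span_eq0 (fun u => In u Vprev));
    [| apply HV, in_span_of_mem; exists q, qd; reflexivity].
  intros u Hu; rewrite <- dot_matvec.
  rewrite (dot_ext _ _ (matvec 6 (XJ (S m) (q (S m))) (matvec 6 (XJfix (S m)) u)))
    by (intros; apply matvec_matmul).
  apply (orbit_annihilated_of_powers _ _ XJ_deriv XJ_at0 y _
           (- 2 * omega_sq (Phi (S m))) (- omega_sq (Phi (S m)) ^ 2)).
  - intros; apply crossm_pow5; assumption.
  - intros k Hk; apply cols0, in_next_cols; right; exists k, u; repeat split; auto; lia.
Qed.

End Joint.

Theorem lemma1 (N : nat) (Phi : nat -> Vec) (XJ : nat -> R -> Mat)
  (XJfix : nat -> Mat) (Hchain : chain_ok N Phi XJ XJfix)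
  (i : nat) (Hi : (1 <= i <= N)%nat) (Vprev : list Vec)
  (HV : forall v, range Vprev v <-> attainable Phi XJ XJfix (i - 1) v) :
  forall v, range (next_cols Phi XJfix i Vprev) v <-> attainable Phi XJ XJfix i v.
Proof.
  destruct i as [|m]; [lia |].
  replace (S m - 1)%nat with m in HV by lia.
  destruct (Hchain (S m) Hi) as [_ [_ [XJ_at0 XJ_deriv]]].
  intros v; split; apply in_span_incl; intros y Hy.
  - apply (next_cols_annihilated Phi XJ XJfix m Vprev XJ_at0 XJ_deriv HV y).
    intros q qd; apply Hy; exists q, qd; reflexivity.
  - intros s [q [qd ->]]; apply (vel_annihilated Phi XJ XJfix m Vprev XJ_at0 XJ_deriv HV y), Hy.
Qed.
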